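(* Let $n=2t$ be even, $V=V_n(q)$, and let $X$ be the set of all unordered pairs $\{U,W\}$ of $t$-dimensional subspaces of $V$ with $V=U\oplus W$. Fix a basis $e_1,\dots,e_n$ of $V$, put $U_0=\langle e_1,\dots,e_t\rangle$, $W_0=\langle e_{t+1},\dots,e_n\rangle$, and let $p$ be the linear map swapping $e_t$ and $e_{t+1}$ and fixing the other basis vectors. Let $\mathcal{O}_1$ be the graph on $X$ whose edge set is the orbit under $\mathrm{P\Gamma L}_n(q)$ of the edge $\{\{U_0,W_0\},\{U_0p,W_0p\}\}$, and let $d$ denote distance in $\mathcal{O}_1$. For $A=\{U_1,W_1\}$ and $B=\{U_2,W_2\}$ in $X$ define $\dim(A,B)=\max\{\dim(U_1\cap W_2),\dim(U_1\cap U_2),\dim(U_2\cap W_1),\dim(W_1\cap W_2)\}$. Then $d(A,B)\ge t-\dim(A,B)$ for all $A,B\in X$. *)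

(* vector spaces V_n(q) = 'rV[F]_n over a finite field F (q = #|F|). *)
From HB Require Import structures.
From mathcomp Require Import all_boot all_order all_algebra all_field.
Set Implicit Arguments. Unset Strict Implicit. Unset Printing Implicit Defensive.
Import GRing.Theory.
Local Open Scope ring_scope.

Notation Vsp F t := 'rV[F]_(t + t).

Section Defs.
Variable F : finFieldType.
Variable t : nat.

(* A vertex is an (ordered representative of an) unordered pair {U,W}. *)
Definition vertex := ({vspace Vsp F t} * {vspace Vsp F t})%type.

Definition ueq (T : Type) (a b : T * T) : Prop :=
  (a.1 = b.1 /\ a.2 = b.2) \/ (a.1 = b.2 /\ a.2 = b.1).

Definition inX (A : vertex) : Prop :=
  \dim A.1 = t /\ \dim A.2 = t /\ directv (A.1 + A.2)%VS /\ (A.1 + A.2)%VS = fullv.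

Definition e (i : 'I_(t + t)) : Vsp F t := delta_mx 0 i.

(* swap of the (0-indexed) coordinates t-1 and t, i.e. e_t <-> e_{t+1} (1-indexed) *)
Definition swapn (k : nat) : nat :=
  if k == t.-1 then t else if k == t then t.-1 else k.

Definition pmx : 'M[F]_(t + t) := \matrix_(i, j) (swapn i == j)%:R.

Definition p (v : Vsp F t) : Vsp F t := v *m pmx.

Definition U0 : {vspace Vsp F t} := (\sum_(i < t + t | (i < t)%N) <[e i]>)%VS.
Definition W0 : {vspace Vsp F t} := (\sum_(i < t + t | (t <= i)%N) <[e i]>)%VS.
Definition U0p : {vspace Vsp F t} := (\sum_(i < t + t | (i < t)%N) <[p (e i)]>)%VS.
Definition W0p : {vspace Vsp F t} := (\sum_(i < t + t | (t <= i)%N) <[p (e i)]>)%VS.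

(* semilinear bijections of V (elements of GammaL_n(q); PGammaL acts on subspaces through them) *)
Definition semilinear (f : Vsp F t -> Vsp F t) : Prop :=
  bijective f /\
  exists sigma : {rmorphism F -> F}, bijective sigma /\
    (forall u v, f (u + v) = f u + f v) /\
    (forall (a : F) v, f (a *: v) = sigma a *: f v).

Definition is_image (f : Vsp F t -> Vsp F t) (U U' : {vspace Vsp F t}) : Prop :=
  forall w, w \in U' <-> exists2 v, v \in U & w = f v.

Definition adjO1 (A B : vertex) : Prop :=
  exists f, semilinear f /\
  exists Ug Wg Upg Wpg : {vspace Vsp F t},
    is_image f U0 Ug /\ is_image f W0 Wg /\ is_image f U0p Upg /\ is_image f W0p Wpg /\
    ((ueq A (Ug, Wg) /\ ueq B (Upg, Wpg)) \/ (ueq A (Upg, Wpg) /\ ueq B (Ug, Wg))).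

Inductive walk : vertex -> vertex -> nat -> Prop :=
| walk0 A B : ueq A B -> walk A B 0
| walkS A C B m : adjO1 A C -> walk C B m -> walk A B m.+1.

Definition dimAB (A B : vertex) : nat :=
  maxn (maxn (\dim (A.1 :&: B.2)%VS) (\dim (A.1 :&: B.1)%VS))
       (maxn (\dim (B.1 :&: A.2)%VS) (\dim (A.2 :&: B.2)%VS)).

End Defs.

From Pilot Require Import Defs.
From HB Require Import structures.
From mathcomp Require Import all_boot all_order all_algebra all_field.
From mathcomp Require Import zify.
Set Implicit Arguments. Unset Strict Implicit. Unset Printing Implicit Defensive.
Import GRing.Theory.

(* The swap p fixes every basis vector but two, so U0 p lies in U0 + <e_{t+1}>,
   W0 p in W0 + <e_t>, and conversely.  Semilinear maps preserve such
   containments, so along an edge {A, C} of O_1 each component of C lies in a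
   component of A plus a line (with matching pairing).  Adding a line raises the
   dimension of an intersection by at most one, so dim(-, B) grows by at most one
   per step of a walk ending at B, while dim(B, B) = t. *)

Section LineExtension.
Variables (K : fieldType) (vT : vectType K).

Lemma dimv_cap_addv_line (X Y S : {vspace vT}) (v : vT) :
  (X <= Y + <[v]>)%VS -> (\dim (X :&: S) <= \dim (Y :&: S) + 1)%N.
Proof.
move=> sXYv; set Z := ((Y + <[v]>) :&: S)%VS.
have dXZ : (\dim (X :&: S) <= \dim Z)%N by apply/dimvS/capvS.
have dZY := dimv_sum_cap Z Y.
have dYv := dimv_sum_cap Y <[v]>.
have dZYs : (\dim (Z + Y) <= \dim (Y + <[v]>))%N.
  by apply: dimvS; rewrite subv_add capvSl addvSl.
have dZcapY : (\dim (Z :&: Y) <= \dim (Y :&: S))%N.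
  by apply: dimvS; rewrite capvC capvS // capvSr.
have dv : (\dim <[v]> <= 1)%N by rewrite dim_vline; case: (v != 0%R).
lia.
Qed.

Lemma sumv_sub_addv_line (I : finType) (P : pred I) (f : I -> vT)
    (Y : {vspace vT}) (v : vT) :
  (forall i, P i -> f i != v -> f i \in Y) ->
  (\sum_(i | P i) <[f i]> <= Y + <[v]>)%VS.
Proof.
move=> fY; apply/subv_sumP => i Pi; rewrite -memvE.
have [-> | fiv] := eqVneq (f i) v; first by rewrite (subvP (addvSr _ _)) ?memv_line.
by rewrite (subvP (addvSl _ _)) ?fY.
Qed.

End LineExtension.

Section Swap.
Variables (F : finFieldType) (t : nat).
Local Open Scope ring_scope.

(* Indexed by nat rather than 'I_(t + t), so that erow t and erow t.-1 make sense
   even when t = 0 (erow k is then the zero row). *)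
Definition erow (k : nat) : Vsp F t := \row_j ((k == j :> nat)%:R : F).

Lemma erow_neq_index k l : erow k != erow l -> k != l.
Proof. by apply: contra_neq => ->. Qed.

Lemma e_erow (i : 'I_(t + t)) : e F i = erow i.
Proof. by apply/rowP => j; rewrite !mxE eqxx /= eq_sym. Qed.

Lemma p_e_erow (i : 'I_(t + t)) : p (e F i) = erow (swapn t i).
Proof. by rewrite /p /e -rowE; apply/rowP => j; rewrite !mxE. Qed.

Lemma swapnP k :
  [\/ k = t.-1 /\ swapn t k = t,
      [/\ k <> t.-1, k = t & swapn t k = t.-1]
    | [/\ k <> t.-1, k <> t & swapn t k = k]].
Proof.
by rewrite /swapn; do 2?case: eqP => ?; [constructor 1 | constructor 2 | constructor 3].
Qed.

Lemma erow_in_U0 k : (k < t)%N -> erow k \in U0 F t.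
Proof.
move=> ltkt; have ltk2t : (k < t + t)%N by lia.
by rewrite -[k]/(Ordinal ltk2t : nat) -e_erow memvE (sumv_sup (Ordinal ltk2t)).
Qed.

Lemma erow_in_W0 k : (t <= k < t + t)%N -> erow k \in W0 F t.
Proof.
case/andP=> letk ltk2t.
by rewrite -[k]/(Ordinal ltk2t : nat) -e_erow memvE (sumv_sup (Ordinal ltk2t)).
Qed.

Lemma U0p_sub_U0_line : (U0p F t <= U0 F t + <[erow t]>)%VS.
Proof.
apply: sumv_sub_addv_line => i lt_it; rewrite p_e_erow => /erow_neq_index/eqP ne.
by apply: erow_in_U0; case: (swapnP i) => [[]|[]|[]]; lia.
Qed.

Lemma W0p_sub_W0_line : (W0p F t <= W0 F t + <[erow t.-1]>)%VS.
Proof.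
apply: sumv_sub_addv_line => i le_ti; rewrite p_e_erow => /erow_neq_index/eqP ne.
by apply: erow_in_W0; have := ltn_ord i; case: (swapnP i) => [[]|[]|[]]; lia.
Qed.

Lemma U0_sub_U0p_line : (U0 F t <= U0p F t + <[erow t.-1]>)%VS.
Proof.
apply: sumv_sub_addv_line => i lt_it; rewrite e_erow => /erow_neq_index/eqP ne.
have -> : erow i = erow (swapn t i) by congr erow; case: (swapnP i) => [[]|[]|[]]; lia.
by rewrite -p_e_erow memvE (sumv_sup i).
Qed.

Lemma W0_sub_W0p_line : (W0 F t <= W0p F t + <[erow t]>)%VS.
Proof.
apply: sumv_sub_addv_line => i le_ti; rewrite e_erow => /erow_neq_index/eqP ne.
have -> : erow i = erow (swapn t i) by congr erow; case: (swapnP i) => [[]|[]|[]]; lia.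
by rewrite -p_e_erow memvE (sumv_sup i).
Qed.

Lemma is_image_addv_line (f : Vsp F t -> Vsp F t) (X Y X' Y' : {vspace Vsp F t}) v :
  Defs.semilinear f -> is_image f X X' -> is_image f Y Y' ->
  (X <= Y + <[v]>)%VS -> (X' <= Y' + <[f v]>)%VS.
Proof.
move=> [_ [sigma [_ [fD fZ]]]] imX imY sXYv; apply/subvP => _ /imX[x Xx ->].
have /memv_addP[y Yy [_ /vlineP[k ->] ->]] := subvP sXYv _ Xx.
rewrite fD fZ memv_add ?memvZ ?memv_line //.
by apply/imY; exists y.
Qed.

End Swap.

Section Distance.
Variables (F : finFieldType) (t : nat).

Definition line_neighbour (A C : vertex F t) := exists v1 v2 : Vsp F t,
  ((C.1 <= A.1 + <[v1]> /\ C.2 <= A.2 + <[v2]>) \/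
   (C.1 <= A.2 + <[v1]> /\ C.2 <= A.1 + <[v2]>))%VS.

Lemma line_neighbour_ueq (P Q A C : vertex F t) a b :
  (Q.1 <= P.1 + <[a]>)%VS -> (Q.2 <= P.2 + <[b]>)%VS ->
  ueq A P -> ueq C Q -> line_neighbour A C.
Proof.
rewrite /line_neighbour => sQP1 sQP2 [] [-> ->] [] [-> ->].
- by exists a, b; left.
- by exists b, a; right.
- by exists a, b; right.
- by exists b, a; left.
Qed.

Lemma adjO1_line_neighbour (A C : vertex F t) : adjO1 A C -> line_neighbour A C.
Proof.
case=> f [slf [Ug [Wg [Upg [Wpg [imU [imW [imUp [imWp [[eqA eqC]|[eqA eqC]]]]]]]]]]].
- apply: (line_neighbour_ueq (P := (Ug, Wg)) (Q := (Upg, Wpg))) eqA eqC.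
  + exact: is_image_addv_line slf imUp imU (U0p_sub_U0_line F t).
  + exact: is_image_addv_line slf imWp imW (W0p_sub_W0_line F t).
- apply: (line_neighbour_ueq (P := (Upg, Wpg)) (Q := (Ug, Wg))) eqA eqC.
  + exact: is_image_addv_line slf imU imUp (U0_sub_U0p_line F t).
  + exact: is_image_addv_line slf imW imWp (W0_sub_W0p_line F t).
Qed.

Lemma dimAB_line_neighbour (A C B : vertex F t) :
  line_neighbour A C -> (dimAB C B <= dimAB A B + 1)%N.
Proof.
rewrite /dimAB (capvC B.1 C.2) (capvC B.1 A.2).
by case=> v1 [v2 [] [s1 s2]];
  have := dimv_cap_addv_line B.1 s1; have := dimv_cap_addv_line B.2 s1;
  have := dimv_cap_addv_line B.1 s2; have := dimv_cap_addv_line B.2 s2;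
  rewrite ?(capvC A.2 B.1); lia.
Qed.

End Distance.

Theorem lemma3p5 (F : finFieldType) (t : nat) (A B : vertex F t) :
  inX A -> inX B ->
  forall m : nat, walk A B m -> (t - dimAB A B <= m)%N.
Proof.
move=> _ XB m walkAB; elim: walkAB XB => {A B m} [A B eqAB | A C B m adjAC _ IH] XB.
- case: XB => dimB1 [dimB2 _]; rewrite /dimAB.
  by case: eqAB => -[-> _]; rewrite capvv; lia.
- have := dimAB_line_neighbour B (adjO1_line_neighbour adjAC).
  by have := IH XB; lia.
Qed.
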